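(* There is no unitary $U$ on two qubits $A\otimes B$ such that for every pure qubit state $|\psi\rangle$, both one-qubit reduced states $\rho_A=\mathrm{Tr}_B\big(U(|\psi\rangle\langle\psi|\otimes|0\rangle\langle0|)U^\dagger\big)$ and $\rho_B=\mathrm{Tr}_A\big(U(|\psi\rangle\langle\psi|\otimes|0\rangle\langle0|)U^\dagger\big)$ satisfy $C_l(\rho_A)=C_l(\rho_B)=C_l(|\psi\rangle)$. (That is, without a machine/ancilla system, no unitary acting on input and blank state clones the coherence of all pure states; in particular no such unitary starting from two orthogonal states $|\psi_1\rangle,|\psi_2\rangle$ via $U|\psi_i\rangle|0\rangle=|\Psi_i\rangle$ extends to clone the coherence of every $\alpha|\psi_1\rangle+\beta|\psi_2\rangle$.)
   Context: For a qubit density matrix $\rho$, the $l_1$-norm of coherence in the computational basis is $C_l(\rho)=\sum_{i\neq j}|\langle i|\rho|j\rangle|$; for a pure state $C_l(|\phi\rangle)=C_l(|\phi\rangle\langle\phi|)$. *)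

(* Complex scalars: an arbitrary numClosedFieldType C
   (e.g. algC; the complex numbers would be an instance). *)
From HB Require Import structures.
From mathcomp Require Import all_boot all_order all_algebra.
Set Implicit Arguments. Unset Strict Implicit. Unset Printing Implicit Defensive.
Import Order.TTheory GRing.Theory Num.Theory.
Local Open Scope ring_scope.

Definition adj (C : numClosedFieldType) m n (A : 'M[C]_(m, n)) : 'M[C]_(n, m) :=
  \matrix_(i, j) (A j i)^*.

Definition unitary (C : numClosedFieldType) n (U : 'M[C]_n) : Prop :=
  U *m adj U = 1%:M.

Definition pure_state (C : numClosedFieldType) n (psi : 'cV[C]_n) : Prop :=
  \sum_i `|psi i 0| ^+ 2 = 1.

Definition proj (C : numClosedFieldType) n (phi : 'cV[C]_n) : 'M[C]_n :=
  phi *m adj phi.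

Definition coh (C : numClosedFieldType) n (rho : 'M[C]_n) : C :=
  \sum_i \sum_(j | j != i) `|rho i j|.

(* two-qubit space A (x) B: basis |a b> has index mxvec_index a b (= 2a + b) *)
Definition tens2 (C : numClosedFieldType) (u v : 'cV[C]_2) : 'cV[C]_(2 * 2) :=
  (mxvec (u *m v^T))^T.

Definition ket0 (C : numClosedFieldType) : 'cV[C]_2 := delta_mx 0 0.

Definition ptrB (C : numClosedFieldType) (rho : 'M[C]_(2 * 2)) : 'M[C]_2 :=
  \matrix_(i, j) \sum_(b < 2) rho (mxvec_index i b) (mxvec_index j b).
Definition ptrA (C : numClosedFieldType) (rho : 'M[C]_(2 * 2)) : 'M[C]_2 :=
  \matrix_(i, j) \sum_(a < 2) rho (mxvec_index a i) (mxvec_index a j).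

From HB Require Import structures.
From mathcomp Require Import all_boot all_order all_algebra.
From mathcomp Require Import ring.
Import Order.TTheory GRing.Theory Num.Theory.
Set Implicit Arguments. Unset Strict Implicit. Unset Printing Implicit Defensive.
Local Open Scope ring_scope.

(* Write U (al|0> + be|1>) |0> with coefficient matrix M = al X + be Y, where X and Y
   are the coefficient matrices of the images of |00> and |10>; both have unit
   Frobenius norm. The two reduced states are the Gram matrices M (adj M) and
   M^T (adj M^T), so their coherences are twice the moduli of their 01 entries.
   Demanding the value 2 |al be^*| for every pure input and testing the resulting
   sesquilinear form on the axes and on the circle |al| = |be| forces the cross terms
   p = (X adj Y)_01 and q = (Y adj X)_01 to satisfy |p|^2 + |q|^2 = 1 and p q^* = 0.
   Hence one of them has modulus 1, and by Cauchy-Schwarz the rows of X and Y not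
   involved in it vanish. Then every column of X is orthogonal to every column of Y,
   so the cross terms of X^T and Y^T vanish, contradicting the same constraint
   coming from the other reduced state. *)

Lemma big_ord2 (V : nmodType) (F : 'I_2 -> V) : \sum_(i < 2) F i = F 0 + F 1.
Proof. by rewrite big_ord_recl big_ord1; congr (_ + F _); apply: val_inj. Qed.

Lemma unit_split_product (R : numDomainType) (x x' y y' : R) :
  x + x' = 1 -> y + y' = 1 -> 0 <= x' -> 0 <= y -> 0 <= y' -> 1 <= x * y ->
  x' = 0 /\ y' = 0.
Proof.
move=> hx hy x'_ge0 y_ge0 y'_ge0 hxy.
have : y' + x' * y + (x * y - 1) = 0.
  have -> : y' + x' * y + (x * y - 1) = (y + y' - 1) + (x + x' - 1) * y by ring.
  by rewrite hx hy subrr mul0r addr0.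
have xy1 : 0 <= x * y - 1 by rewrite subr_ge0.
move/eqP; rewrite paddr_eq0 ?xy1 ?addr_ge0 ?mulr_ge0 // => /andP[].
rewrite paddr_eq0 ?mulr_ge0 // mulf_eq0 => /andP[/eqP y'0 /orP[/eqP-> //|/eqP y0]] _.
by move: hy; rewrite y0 y'0 addr0 => /eqP; rewrite eq_sym oner_eq0.
Qed.

Section ComplexScalars.
Variable C : numClosedFieldType.

Lemma unit_circle_polarization (p q : C) :
  (forall w : C, `|w| = 1 -> `|w * p + w^* * q| = 1) ->
  `|p| ^+ 2 + `|q| ^+ 2 = 1 /\ p * q^* = 0.
Proof.
move=> H; set S := _ + _; set r := p * q^*.
have expand w : `|w| = 1 -> S + w ^+ 2 * r + w^* ^+ 2 * r^* = 1.
  move=> w1; have ww : w * w^* = 1 by rewrite -normCK w1 expr1n.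
  rewrite -(expr1n _ 2) -(H w w1) /S /r !normCK !(rmorphD, rmorphM) /= !conjCK.
  by rewrite -[_ + q * q^*]mul1r -ww; ring.
have := expand 1 (normr1 _); rewrite rmorph1 expr1n !mul1r => e1.
have := expand 'i (normCi C); rewrite conjCi sqrrN sqrCi !mulN1r => e2.
have sqrt_i1 : `|sqrtC 'i| = 1 :> C.
  by apply/eqP; rewrite -(@pexpr_eq1 _ _ 2) // -normrX sqrtCK normCi.
have := expand _ sqrt_i1; rewrite -rmorphXn /= sqrtCK conjCi => e3.
have rN : r^* = - r.
  have : 2 * (r + r^*) = (S + r + r^*) - (S + - r + - r^*) by ring.
  rewrite e1 e2 subrr => /eqP.
  by rewrite mulf_eq0 pnatr_eq0 orFb addrC addr_eq0 => /eqP.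
have S1 : S = 1 by rewrite -e1 rN addrK.
split=> //; have : 'i * r *+ 2 = (S + 'i * r + - 'i * r^*) - S by rewrite rN; ring.
rewrite e3 S1 subrr => /eqP; rewrite mulrn_eq0 mulf_eq0 (negPf (neq0Ci C)) /=.
by move/eqP.
Qed.

Lemma coherence_form_constraints (A p q B : C) :
  (forall al be : C, `|al| ^+ 2 + `|be| ^+ 2 = 1 ->
     `|al * al^* * A + al * be^* * p + be * al^* * q + be * be^* * B| = `|al * be^*|) ->
  `|p| ^+ 2 + `|q| ^+ 2 = 1 /\ p * q^* = 0.
Proof.
move=> H.
have A0 : A = 0.
  have := H 1 0; rewrite normr1 normr0 expr1n expr0n addr0 rmorph0 rmorph1.
  rewrite !(mulr0, mul0r, mulr1) !addr0 normr0 mul1r => /(_ erefl)/eqP.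
  by rewrite normr_eq0 => /eqP.
have B0 : B = 0.
  have := H 0 1; rewrite normr1 normr0 expr1n expr0n add0r rmorph0 rmorph1.
  rewrite !(mulr0, mul0r, mulr1) !add0r normr0 mul1r => /(_ erefl)/eqP.
  by rewrite normr_eq0 => /eqP.
apply: unit_circle_polarization => w w1.
pose s := sqrtC (2^-1 : C).
have ss : s * s^* = 2^-1.
  by rewrite -normCK ger0_norm ?sqrtCK // sqrtC_ge0 invr_ge0 ler0n.
have norm_sw : `|s| ^+ 2 + `|s * w^*| ^+ 2 = 1.
  by rewrite normrM norm_conjC w1 mulr1 normCK ss; field.
have := H s (s * w^*) norm_sw; rewrite A0 B0 rmorphM /= conjCK.
have -> : s * s^* * 0 + s * (s^* * w) * p + s * w^* * s^* * q
          + s * w^* * (s^* * w) * 0 = (s * s^*) * (w * p + w^* * q) by ring.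
have -> : s * (s^* * w) = (s * s^*) * w by ring.
rewrite ss !normrM w1 => /(mulfI _) -> //.
by rewrite normr_eq0 invr_eq0 pnatr_eq0.
Qed.

End ComplexScalars.

Section Gram.
Variable C : numClosedFieldType.

Lemma adjD m n (A B : 'M[C]_(m, n)) : adj (A + B) = adj A + adj B.
Proof. by apply/matrixP => i j; rewrite !mxE rmorphD. Qed.

Lemma adjZ m n (a : C) (A : 'M[C]_(m, n)) : adj (a *: A) = a^* *: adj A.
Proof. by apply/matrixP => i j; rewrite !mxE rmorphM. Qed.

Lemma conj_mulmx_adj m n (A B : 'M[C]_(m, n)) i j :
  ((A *m adj B) i j)^* = (B *m adj A) j i.
Proof.
rewrite !mxE rmorph_sum; apply: eq_bigr => k _.
by rewrite !mxE rmorphM /= conjCK mulrC.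
Qed.

Lemma gram_lincomb m n (a b : C) (X Y : 'M[C]_(m, n)) :
  (a *: X + b *: Y) *m adj (a *: X + b *: Y) =
  (a * a^*) *: (X *m adj X) + (a * b^*) *: (X *m adj Y)
  + (b * a^*) *: (Y *m adj X) + (b * b^*) *: (Y *m adj Y).
Proof.
rewrite adjD !adjZ mulmxDl !mulmxDr -!scalemxAl -!scalemxAr !scalerA.
by rewrite !addrA.
Qed.

Lemma gram_diag_ge0 m n (X : 'M[C]_(m, n)) i : 0 <= (X *m adj X) i i.
Proof. by rewrite mxE; apply: sumr_ge0 => j _; rewrite mxE mul_conjC_ge0. Qed.

Lemma gram_diag_eq0 m n (X : 'M[C]_(m, n)) i :
  (X *m adj X) i i = 0 -> forall j, X i j = 0.
Proof.
rewrite mxE => S0 j; apply/eqP; rewrite -mul_conjC_eq0; apply/eqP.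
have nonneg k : true -> 0 <= X i k * adj X k i by rewrite mxE mul_conjC_ge0.
by have := psumr_eq0P nonneg S0 (i := j) isT; rewrite mxE.
Qed.

Lemma gram_cauchy_schwarz m (X Y : 'M[C]_(m, 2)) i j :
  `|(X *m adj Y) i j| ^+ 2 <= (X *m adj X) i i * (Y *m adj Y) j j.
Proof.
have lagrange : (X *m adj X) i i * (Y *m adj Y) j j =
    `|(X *m adj Y) i j| ^+ 2 + `|X i 0 * Y j 1 - X i 1 * Y j 0| ^+ 2.
  rewrite !normCK !mxE !big_ord2 !mxE !(rmorphD, rmorphB, rmorphM) /= !conjCK.
  ring.
by rewrite lagrange lerDl normCK mul_conjC_ge0.
Qed.

Lemma trmx_adj_orthogonal m n (X Y : 'M[C]_(m, n)) :
  (forall k, (X *m adj X) k k = 0 \/ (Y *m adj Y) k k = 0) ->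
  X^T *m adj Y^T = 0.
Proof.
move=> sep; apply/matrixP => a b; rewrite !mxE big1 // => k _.
rewrite !mxE; case: (sep k) => /gram_diag_eq0 -> ; by rewrite ?mul0r ?rmorph0 ?mulr0.
Qed.

End Gram.

Lemma sum_mxvec_index (V : nmodType) m n (F : 'I_(m * n) -> V) :
  \sum_k F k = \sum_i \sum_j F (mxvec_index i j).
Proof.
rewrite pair_big /= (reindex (uncurry (@mxvec_index m n))) /=.
  by apply: eq_bigr => -[i j].
exact: curry_mxvec_bij.
Qed.

Section TwoQubits.
Variable C : numClosedFieldType.

(* phi = \sum_(a, b) coef_mx phi a b |a b>. *)
Definition coef_mx (phi : 'cV[C]_(2 * 2)) : 'M[C]_2 := vec_mx phi^T.

Lemma coh_gram n (M : 'M[C]_(2, n)) : coh (M *m adj M) = `|(M *m adj M) 0 1| *+ 2.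
Proof.
rewrite /coh !big_ord2 !(big_mkcond (fun j => j != _)) !big_ord2 /=.
by rewrite !add0r !addr0 -conj_mulmx_adj norm_conjC mulr2n.
Qed.

Lemma coh_proj (psi : 'cV[C]_2) : coh (proj psi) = `|psi 0 0 * (psi 1 0)^*| *+ 2.
Proof. by rewrite coh_gram mxE big_ord1 mxE. Qed.

Lemma ptrB_proj (phi : 'cV[C]_(2 * 2)) :
  ptrB (proj phi) = coef_mx phi *m adj (coef_mx phi).
Proof.
by apply/matrixP => i j; rewrite !mxE; apply: eq_bigr => b _; rewrite !mxE big_ord1 !mxE.
Qed.

Lemma ptrA_proj (phi : 'cV[C]_(2 * 2)) :
  ptrA (proj phi) = (coef_mx phi)^T *m adj (coef_mx phi)^T.
Proof.
by apply/matrixP => i j; rewrite !mxE; apply: eq_bigr => a _; rewrite !mxE big_ord1 !mxE.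
Qed.

Lemma coef_mx_mul_tens2_ket0 (U : 'M[C]_(2 * 2)) (psi : 'cV[C]_2) :
  coef_mx (U *m tens2 psi (ket0 C)) =
  psi 0 0 *: coef_mx (col (mxvec_index 0 0) U)
  + psi 1 0 *: coef_mx (col (mxvec_index 1 0) U).
Proof.
apply/matrixP => a b; rewrite !mxE sum_mxvec_index !big_ord2 !mxE !mxvecE !mxE.
by rewrite !big_ord1 !mxE /=; ring.
Qed.

Lemma unitary_coef_mx_col (U : 'M[C]_(2 * 2)) j :
  unitary U -> \tr (coef_mx (col j U) *m adj (coef_mx (col j U))) = 1.
Proof.
move=> /mulmx1C/matrixP/(_ j j); rewrite !mxE eqxx mulr1n => <-.
rewrite sum_mxvec_index; apply: eq_bigr => a _; rewrite mxE.
by apply: eq_bigr => b _; rewrite !mxE mulrC.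
Qed.

End TwoQubits.

Section CoherenceCloning.
Variable C : numClosedFieldType.
Implicit Types X Y : 'M[C]_2.

Lemma cross_gram_norm1 X Y :
  \tr (X *m adj X) = 1 -> \tr (Y *m adj Y) = 1 -> `|(X *m adj Y) 0 1| = 1 ->
  (X *m adj X) 1 1 = 0 /\ (Y *m adj Y) 0 0 = 0.
Proof.
rewrite /mxtrace !big_ord2 => trX trY XY1; rewrite addrC in trY.
refine (unit_split_product trX trY _ _ _ _); rewrite ?gram_diag_ge0 //.
by rewrite -(expr1n _ 2) -XY1 gram_cauchy_schwarz.
Qed.

Lemma cross_gram_norm1_trmx X Y :
  \tr (X *m adj X) = 1 -> \tr (Y *m adj Y) = 1 -> `|(X *m adj Y) 0 1| = 1 ->
  X^T *m adj Y^T = 0 /\ Y^T *m adj X^T = 0.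
Proof.
move=> trX trY /(cross_gram_norm1 trX trY) [X1 Y0].
have sep k : (X *m adj X) k k = 0 \/ (Y *m adj Y) k k = 0.
  case: k => -[|[|//]] ?; [right; rewrite -Y0 | left; rewrite -X1];
    by congr (_ _ _); apply: val_inj.
by split; apply: trmx_adj_orthogonal => // k; case: (sep k); [right | left].
Qed.

Lemma gram_coherence_constraints X Y :
  (forall al be : C, `|al| ^+ 2 + `|be| ^+ 2 = 1 ->
     `|((al *: X + be *: Y) *m adj (al *: X + be *: Y)) 0 1| = `|al * be^*|) ->
  `|(X *m adj Y) 0 1| ^+ 2 + `|(Y *m adj X) 0 1| ^+ 2 = 1 /\
  (X *m adj Y) 0 1 * ((Y *m adj X) 0 1)^* = 0.
Proof.
move=> H.
apply: (coherence_form_constraints (A := (X *m adj X) 0 1) (B := (Y *m adj Y) 0 1)).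
move=> al be /H; rewrite gram_lincomb.
set XX := X *m adj X; set XY := X *m adj Y; set YX := Y *m adj X; set YY := Y *m adj Y.
by rewrite !mxE.
Qed.

Lemma no_cross_gram_constraints X Y :
  \tr (X *m adj X) = 1 -> \tr (Y *m adj Y) = 1 ->
  `|(X *m adj Y) 0 1| ^+ 2 + `|(Y *m adj X) 0 1| ^+ 2 = 1 ->
  (X *m adj Y) 0 1 * ((Y *m adj X) 0 1)^* = 0 ->
  `|(X^T *m adj Y^T) 0 1| ^+ 2 + `|(Y^T *m adj X^T) 0 1| ^+ 2 = 1 -> False.
Proof.
move=> trX trY norm1 /eqP; rewrite mulf_eq0 conjC_eq0 => orth.
have norm1_of_other (p q : C) : `|p| ^+ 2 + `|q| ^+ 2 = 1 -> q = 0 -> `|p| = 1.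
  by move=> + q0; rewrite q0 normr0 expr0n addr0 => /eqP; rewrite pexpr_eq1 // => /eqP.
have [T0 T0'] : X^T *m adj Y^T = 0 /\ Y^T *m adj X^T = 0.
  case/orP: orth => /eqP pq0.
  - rewrite addrC in norm1.
    by have [-> ->] := cross_gram_norm1_trmx trY trX (norm1_of_other _ _ norm1 pq0).
  - exact: cross_gram_norm1_trmx trX trY (norm1_of_other _ _ norm1 pq0).
by rewrite T0 T0' !mxE normr0 expr0n addr0 => /eqP; rewrite eq_sym oner_eq0.
Qed.

End CoherenceCloning.

Theorem theorem2 (C : numClosedFieldType) :
  ~ (exists U : 'M[C]_(2 * 2),
       unitary U /\
       forall psi : 'cV[C]_2, pure_state psi ->
         let rho := proj (U *m tens2 psi (ket0 C)) in
         coh (ptrB rho) = coh (proj psi) /\ coh (ptrA rho) = coh (proj psi)).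
Proof.
case=> U [unitU clone].
set X := coef_mx (col (mxvec_index 0 0) U); set Y := coef_mx (col (mxvec_index 1 0) U).
have coh_eq al be : `|al| ^+ 2 + `|be| ^+ 2 = 1 ->
    `|((al *: X + be *: Y) *m adj (al *: X + be *: Y)) 0 1| = `|al * be^*| /\
    `|((al *: X^T + be *: Y^T) *m adj (al *: X^T + be *: Y^T)) 0 1| = `|al * be^*|.
  move=> norm1; pose psi : 'cV[C]_2 := \col_i (if i == 0 then al else be).
  have pure : pure_state psi by rewrite /pure_state big_ord2 !mxE.
  have := clone psi pure; rewrite /= ptrB_proj ptrA_proj coef_mx_mul_tens2_ket0.
  rewrite linearD /= !linearZ /= coh_proj !coh_gram !mxE /=.
  by case=> /(pmulrnI (isT : (0 < 2)%N)) -> /(pmulrnI (isT : (0 < 2)%N)) ->.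
have [pB qB] := gram_coherence_constraints (fun al be n1 => (coh_eq al be n1).1).
have [pA _] := gram_coherence_constraints (fun al be n1 => (coh_eq al be n1).2).
have trX := unitary_coef_mx_col (mxvec_index 0 0) unitU.
have trY := unitary_coef_mx_col (mxvec_index 1 0) unitU.
exact: no_cross_gram_constraints trX trY pB qB pA.
Qed.
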